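(* Let $\ell$ be an odd multiple of $3$. Let $S\subseteq D_{8\ell+6}\setminus\{e\}$ with $|S|=8\ell+4$, and let $x$ be the non-identity element of $D_{8\ell+6}$ not in $S$. If $x$ has order $(4\ell+3)/3$, then $D_{8\ell+6}$ has an $S$-sequencing.
   Context: $D_{2m}=\langle u,v : u^m=e=v^2,\ vu=u^{m-1}v\rangle$ is the dihedral group of order $2m$. For $S\subseteq G\setminus\{e\}$ with $|S|=k$, an $S$-sequencing of $G$ is an ordering $(g_1,\dots,g_k)$ of the elements of $S$ such that the partial products $h_0=e$, $h_i=g_1\cdots g_i$ ($1\le i\le k$) are pairwise distinct. *)

From mathcomp Require Import all_boot all_fingroup.
Set Implicit Arguments. Unset Strict Implicit. Unset Printing Implicit Defensive.
Local Open Scope group_scope.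

Definition partial_prods (gT : finGroupType) (s : seq gT) : seq gT :=
  [seq foldl mulg 1 (take i s) | i <- iota 0 (size s).+1].

Definition S_sequencing (gT : finGroupType) (S : {set gT}) (s : seq gT) : Prop :=
  perm_eq s (enum S) /\ uniq (partial_prods s).

Definition is_dihedral (gT : finGroupType) (G : {group gT}) (m : nat) (u v : gT) : Prop :=
  [/\ G :=: <<[set u; v]>>, u ^+ m = 1, v ^+ 2 = 1, v * u = u ^+ (m.-1) * v
    & #|G| = (2 * m)%N].

(* Write m = 4r + 3 and encode u^a v^b in D_2m as (b, a). The partial products
   of a sequence g_i = h_(i-1)^-1 h_i telescope to h_0^-1 h_i, so it suffices to
   exhibit a walk h_0, ..., h_(8r+4) through distinct elements of D_2m whose steps
   g_i are distinct and avoid e and u^3: its steps then sequence D_2m \ {e, u^3}.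
   For x of order m/3, x is a rotation, hence x = w^3 for a generator w of <u>;
   since (w, v) is again a dihedral presentation, the walk built on (w, v)
   sequences D_2m \ {e, x}. *)

From mathcomp Require Import all_boot all_fingroup all_solvable zify.
Set Implicit Arguments. Unset Strict Implicit. Unset Printing Implicit Defensive.

(* (b, a) codes u^a v^b (see [dcode]); [hcode r i] is h_i and [gcode r i] is
   g_(i+1) for D_2m with m = 4r + 3. *)
Definition hcode (r i : nat) : bool * nat :=
  if i < 2*r then (if odd i then (false, 2*r - i) else (false, 2*r + 4 + i))
  else if i < 4*r + 2 then
    (if odd (i - 2*r) then (true, 4*r + 3 - (i - 2*r)) else (false, i - 2*r))
  else if i < 6*r + 4 then
    (if odd (i - (4*r + 2)) then (true, 2*r + 2 - (i - (4*r + 2)))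
     else (false, 2*r + 1 + (i - (4*r + 2))))
  else if i == 6*r + 4 then (true, 0)
  else if odd (i - (6*r + 4)) then (true, i - (6*r + 4) + 1)
  else (true, 4*r + 3 - (i - (6*r + 4))).

Definition gcode (r i : nat) : bool * nat :=
  if i < 2*r then
    (if odd i then (if i == 2*r - 1 then (false, 4*r + 2) else (false, 2*i + 5))
     else (false, 4*r - 2 - 2*i))
  else if i < 4*r + 1 then (true, 4*r + 2 - 2*(i - 2*r))
  else if i == 4*r + 1 then (true, 1)
  else if i == 4*r + 2 then (true, 0)
  else if i < 6*r + 3 then (true, 4*r + 3 - 2*(i - (4*r + 2)))
  else if i == 6*r + 3 then (false, 1)
  else if odd (i - (6*r + 4)) then (false, 2*(i - (6*r + 4)) + 2)
  else (false, 4*r + 1 - 2*(i - (6*r + 4))).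

(* [dcode p * dcode q = dcode p'] in D_2m, stated without subtraction or
   reduction mod m so that lia can check it for the codes above. *)
Definition code_step (m : nat) (p q p' : bool * nat) : Prop :=
  p'.1 = p.1 (+) q.1 /\
  if p.1 then p'.2 + q.2 = p.2 \/ p'.2 + q.2 = p.2 + m
  else p.2 + q.2 = p'.2 \/ p.2 + q.2 = p'.2 + m.

Section Codes.

Variable r : nat.
Hypothesis r_gt0 : 0 < r.

Lemma hcode_bound i : i < 8*r + 5 -> (hcode r i).2 < 4*r + 3.
Proof. rewrite /hcode => ?; repeat case: ifP => ? /=; lia. Qed.

Lemma gcode_bound i : i < 8*r + 4 -> (gcode r i).2 < 4*r + 3.
Proof. rewrite /gcode => ?; repeat case: ifP => ? /=; lia. Qed.

Lemma hcode_inj i j : i < 8*r + 5 -> j < 8*r + 5 -> hcode r i = hcode r j -> i = j.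
Proof.
move=> ? ? eq_ij; have := congr1 fst eq_ij; have := congr1 snd eq_ij; rewrite /hcode.
by repeat case: ifP => ?; move=> /= *; lia.
Qed.

Lemma gcode_inj i j : i < 8*r + 4 -> j < 8*r + 4 -> gcode r i = gcode r j -> i = j.
Proof.
move=> ? ? eq_ij; have := congr1 fst eq_ij; have := congr1 snd eq_ij; rewrite /gcode.
by repeat case: ifP => ?; move=> /= *; lia.
Qed.

Lemma gcode_avoid i : i < 8*r + 4 -> gcode r i <> (false, 0) /\ gcode r i <> (false, 3).
Proof. by rewrite /gcode => ?; repeat case: ifP => ? //; split=> -[]; lia. Qed.

Lemma hcode_step i :
  i < 8*r + 4 -> code_step (4*r + 3) (hcode r i) (gcode r i) (hcode r i.+1).
Proof.
rewrite /code_step /hcode /gcode => ?.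
by repeat case: ifP => ? /=; try (exfalso; lia); split => //; lia.
Qed.

End Codes.

Local Open Scope group_scope.

Definition dcode (gT : finGroupType) (u v : gT) (p : bool * nat) : gT :=
  u ^+ p.2 * v ^+ p.1.

Section DihedralCodes.

Variables (gT : finGroupType) (G : {group gT}) (m : nat) (u v : gT).
Hypothesis dihG : is_dihedral G m u v.

Local Notation dcode := (dcode u v).

Lemma dihedral_gt0 : 0 < m.
Proof.
by case: dihG => _ _ _ _ cardG; rewrite -(ltn_pmul2l (isT : 0 < 2)) -cardG cardG_gt0.
Qed.

Lemma dihedral_mem_gens : u \in G /\ v \in G.
Proof. by case: dihG => -> *; rewrite !mem_gen // !inE eqxx ?orbT. Qed.

Lemma dihedral_mulvX a : v * u ^+ a = u ^+ (a * m.-1)%N * v.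
Proof.
case: dihG => _ _ _ vu _; elim: a => [|a IHa]; first by rewrite mulg1 mul1g.
by rewrite expgSr mulgA IHa -mulgA vu mulgA -expgD mulSn addnC.
Qed.

Lemma dcode_rot a : dcode (false, a) = u ^+ a.
Proof. exact: mulg1. Qed.

Lemma dcodeDmul b a k : dcode (b, a + k * m)%N = dcode (b, a).
Proof. by case: dihG => _ um *; rewrite /dcode /= expgD mulnC expgM um expg1n mulg1. Qed.

Lemma dcodeDm b a : dcode (b, a + m) = dcode (b, a).
Proof. by rewrite -{1}(mul1n m) dcodeDmul. Qed.

Lemma dcode_mod b a : dcode (b, a %% m) = dcode (b, a).
Proof. by rewrite {2}(divn_eq a m) addnC dcodeDmul. Qed.

Lemma dcodeM b1 a1 b2 a2 :
  dcode (b1, a1) * dcode (b2, a2) =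
  dcode (b1 (+) b2, (a1 + (if b1 then a2 * m.-1 else a2))%N).
Proof.
case: dihG => _ _ vv _ _; rewrite /dcode /= expgD -!mulgA; congr (_ * _).
case: b1 => /=; last by rewrite mul1g.
rewrite mulgA dihedral_mulvX -mulgA; congr (_ * _).
by case: b2 => /=; rewrite ?mulg1 // -expgS vv.
Qed.

Lemma dcode_step p q p' : code_step m p q p' -> dcode p * dcode q = dcode p'.
Proof.
case: p q p' => [b a] [c b'] [b'' a'] [/= -> ab].
have m_gt0 := dihedral_gt0.
case: b ab => /= ab; last by rewrite dcodeM /=; case: ab => ->; rewrite ?dcodeDm.
have -> : dcode (true, a) = dcode (true, a' + b') by case: ab => ->; rewrite ?dcodeDm.
by rewrite dcodeM -addnA [b' + _]addnC -mulnSr prednK // dcodeDmul.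
Qed.

Definition dcodes := [set dcode (p.1, val p.2) | p in [set: bool * 'I_m]].

Lemma mem_dcodes p : dcode p \in dcodes.
Proof.
case: p => b a; rewrite -dcode_mod; apply/imsetP.
by exists (b, Ordinal (ltn_pmod a dihedral_gt0)).
Qed.

Lemma dcodes_group : group_set dcodes.
Proof.
apply/group_setP; split; first by rewrite -(mulg1 1) (mem_dcodes (false, 0)).
by move=> _ _ /imsetP[p _ ->] /imsetP[q _ ->]; rewrite dcodeM mem_dcodes.
Qed.

Lemma dcodesE : dcodes = G.
Proof.
have [defG _ _ _ _] := dihG; have [uG vG] := dihedral_mem_gens.
apply/eqP; rewrite eqEsubset; apply/andP; split.
  apply/subsetP=> _ /imsetP[[b a] _ ->].
  by rewrite /dcode groupM ?groupX.
rewrite defG -(gen_set_id dcodes_group) genS //; apply/subsetP=> y.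
rewrite !inE => /orP[] /eqP->.
  by rewrite (_ : u = dcode (false, 1%N)) ?mem_dcodes // dcode_rot expg1.
by rewrite (_ : v = dcode (true, 0%N)) ?mem_dcodes // /dcode mul1g expg1.
Qed.

Lemma dcode_inj p q : p.2 < m -> q.2 < m -> dcode p = dcode q -> p = q.
Proof.
have [_ _ _ _ cardG] := dihG.
have /eqP/imset_injP inj : #|dcodes| = #|[set: bool * 'I_m]|.
  by rewrite dcodesE cardsT card_prod card_bool card_ord cardG.
case: p q => b a [c a'] /= am a'm /(inj (b, Ordinal am) (c, Ordinal a'm)).
by case/(_ (in_setT _) (in_setT _)) => -> ->.
Qed.

Lemma dcode_onto y : y \in G -> exists2 p, p.2 < m & y = dcode p.
Proof. by rewrite -dcodesE => /imsetP[[b a] _ ->]; exists (b, val a) => /=. Qed.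

Lemma dihedral_order : #[u] = m.
Proof.
have [_ um _ _ _] := dihG; have m_gt0 := dihedral_gt0.
apply/eqP; rewrite eqn_leq dvdn_leq ?order_dvdn ?um //= leqNgt; apply/negP => lt_um.
have := @dcode_inj (false, #[u]) (false, 0) lt_um m_gt0.
by rewrite !dcode_rot expg_order expg0 => /(_ erefl) [] /eqP; rewrite eqn0Ngt order_gt0.
Qed.

Lemma dihedral_rotation y : y \in G -> 2 < #[y] -> y \in <[u]>.
Proof.
case/dcode_onto => -[[] a] _ ->; last by rewrite dcode_rot mem_cycle.
have refl2 : dcode (true, a) ^+ 2 = 1.
  rewrite expgS expg1 dcodeM /= [a + _]addnC -mulnSr prednK ?dihedral_gt0 //.
  by rewrite -[(a * m)%N]add0n dcodeDmul dcode_rot.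
have : #[dcode (true, a)] <= 2 by rewrite dvdn_leq // order_dvdn refl2.
by rewrite leqNgt => /negPf ->.
Qed.

Lemma dihedral_generator k : coprime m k -> is_dihedral G m (u ^+ k) v.
Proof.
have [defG um vv _ cardG] := dihG; have [uG vG] := dihedral_mem_gens.
move=> mk; split=> //; last 2 first.
- by rewrite expgAC um expg1n.
- by rewrite dihedral_mulvX expgM.
have gen_uk : generator <[u]> (u ^+ k) by rewrite generator_coprime dihedral_order.
have uk_sub : <[u ^+ k]> \subset <<[set u ^+ k; v]>>.
  by rewrite cycle_subG mem_gen ?inE ?eqxx.
apply/eqP; rewrite eqEsubset gen_subG {1}defG gen_subG.
apply/andP; split; apply/subsetP=> y; rewrite !inE => /orP[] /eqP->.
- by rewrite (subsetP uk_sub) // -(eqP gen_uk) cycle_id.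
- by rewrite mem_gen // !inE eqxx orbT.
- exact: groupX.
- exact: vG.
Qed.

Lemma mem_dcode p : dcode p \in G.
Proof. by rewrite -dcodesE mem_dcodes. Qed.

End DihedralCodes.

Lemma coprime_lift p q a :
  prime p -> coprime q a -> exists2 k, coprime (p * q) k & k = a %[mod q].
Proof.
move=> p_pr qa; have [pa | pNa] := boolP (p %| a); last first.
  by exists a => //; rewrite coprimeMl prime_coprime // pNa.
exists (a + q)%N; last by rewrite modnDr.
rewrite coprimeMl [coprime q _]/coprime gcdnDr -/(coprime q a) qa andbT prime_coprime //.
have pNq : ~~ (p %| q).
  apply/negP => pq; have := dvdn_gcd p q a; rewrite pq pa (eqP qa) dvdn1 => /eqP p1.
  by rewrite p1 in p_pr.
by rewrite dvdn_addr.
Qed.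

Lemma generator_expg_of_order (gT : finGroupType) (u x : gT) p q :
  prime p -> #[u] = (p * q)%N -> x \in <[u]> -> #[x] = q ->
  exists2 k, coprime (p * q) k & x = (u ^+ k) ^+ p.
Proof.
move=> p_pr ou /cycleP[a ->] oua.
have p_gt0 := prime_gt0 p_pr; have q_gt0 : 0 < q by rewrite -oua order_gt0.
have gcd_pa : gcdn (p * q) a = p.
  apply/eqP; rewrite -(eqn_pmul2l q_gt0) -{1}oua orderXgcd ou divnK ?dvdn_gcdl //.
  by rewrite mulnC.
have /dvdnP[a' def_a] : p %| a by rewrite -gcd_pa dvdn_gcdr.
have qa' : coprime q a'.
  move: gcd_pa; rewrite def_a [(a' * p)%N]mulnC -muln_gcdr => /eqP.
  by rewrite -{2}(muln1 p) eqn_pmul2l.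
have [k pqk ka'] := coprime_lift p_pr qa'.
exists k => //; apply/eqP; rewrite -expgM eq_expg_mod_order ou def_a.
by rewrite [(p * q)%N]mulnC -!muln_modl ka'.
Qed.

Lemma foldl_quotients (gT : finGroupType) (h : nat -> gT) n :
  foldl mulg 1 [seq (h i)^-1 * h i.+1 | i <- iota 0 n] = (h 0%N)^-1 * h n.
Proof.
elim: n => [|n IHn]; first by rewrite mulVg.
by rewrite -addn1 iotaD map_cat foldl_cat IHn /= add0n addn1 mulgA mulgK.
Qed.

Lemma partial_prods_quotients (gT : finGroupType) (h : nat -> gT) n :
  partial_prods [seq (h i)^-1 * h i.+1 | i <- iota 0 n] =
  [seq (h 0%N)^-1 * h i | i <- iota 0 n.+1].
Proof.
rewrite /partial_prods size_map size_iota; apply/eq_in_map => i.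
rewrite mem_iota => /andP[_ lt_in]; rewrite -map_take take_iota.
by rewrite (minn_idPl _) ?foldl_quotients // -ltnS.
Qed.

Lemma S_sequencing_quotients (gT : finGroupType) (S : {set gT}) (h : nat -> gT) n :
  #|S| = n ->
  (forall i j, i <= n -> j <= n -> h i = h j -> i = j) ->
  (forall i j, i < n -> j < n -> (h i)^-1 * h i.+1 = (h j)^-1 * h j.+1 -> i = j) ->
  (forall i, i < n -> (h i)^-1 * h i.+1 \in S) ->
  S_sequencing S [seq (h i)^-1 * h i.+1 | i <- iota 0 n].
Proof.
move=> cardS h_inj g_inj gS; split.
  have g_uniq : uniq [seq (h i)^-1 * h i.+1 | i <- iota 0 n].
    by rewrite map_inj_in_uniq ?iota_uniq // => i j; rewrite !mem_iota; apply: g_inj.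
  apply: uniq_perm; rewrite ?enum_uniq //; apply: (uniq_min_size g_uniq _ _).2.
    by move=> y /mapP[i]; rewrite mem_iota => /andP[_ /gS gi] ->; rewrite mem_enum.
  by rewrite size_map size_iota -cardE cardS.
rewrite partial_prods_quotients map_inj_in_uniq ?iota_uniq // => i j.
by rewrite !mem_iota !ltnS => ? ? /mulgI; apply: h_inj.
Qed.

Lemma setD_pair_eq (T : finType) (A B : {set T}) a b :
  a \in A -> b \in A -> b != a -> B \subset A :\ a -> b \notin B ->
  #|B| = (#|A| - 2)%N -> B = A :\: [set a; b].
Proof.
move=> aA bA ba sBA bNB cardB; apply/eqP; rewrite eqEcard; apply/andP; split.
  apply/subsetP=> y yB; have := subsetP sBA y yB; rewrite !inE negb_or.
  by move=> /andP[-> ->]; rewrite andbT; apply: contraNneq bNB => <-.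
have sabA : [set a; b] \subset A by rewrite subUset !sub1set aA bA.
by rewrite cardsD (setIidPr sabA) cards2 eq_sym ba cardB.
Qed.

Theorem dihedral_sequencing_cube (gT : finGroupType) (G : {group gT}) (r : nat) (u v : gT) :
  0 < r -> is_dihedral G (4 * r + 3) u v ->
  exists s, S_sequencing (G :\: [set 1; u ^+ 3]) s.
Proof.
move=> r_gt0 dihG; pose h i := dcode u v (hcode r i).
have gcodeE i : i < 8 * r + 4 -> (h i)^-1 * h i.+1 = dcode u v (gcode r i).
  by move=> lt_i; rewrite /h -(dcode_step dihG (hcode_step r_gt0 lt_i)) mulKg.
have gcodeNrot i a : i < 8 * r + 4 -> a < 4 * r + 3 -> gcode r i <> (false, a) ->
    dcode u v (gcode r i) != u ^+ a.
  move=> lt_i lt_a neq; rewrite -(dcode_rot u v); apply/eqP.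
  by move/(dcode_inj dihG (gcode_bound r_gt0 lt_i) (lt_a : (false, a).2 < _)).
exists [seq (h i)^-1 * h i.+1 | i <- iota 0 (8 * r + 4)].
apply: S_sequencing_quotients.
- have [_ _ _ _ cardG] := dihG.
  have u3_1 : u ^+ 3 != 1.
    rewrite -order_dvdn (dihedral_order dihG).
    by apply/negP => /(dvdn_leq (isT : 0 < 3)); lia.
  have sub1u3 : [set 1; u ^+ 3] \subset G.
    by rewrite subUset !sub1set group1 -(dcode_rot u v) (mem_dcode dihG).
  by rewrite cardsD (setIidPr sub1u3) cards2 eq_sym u3_1 cardG; lia.
- move=> i j le_i le_j /(dcode_inj dihG) eq_h; apply: (@hcode_inj r); try lia.
  by apply: eq_h; apply: hcode_bound; lia.
- move=> i j lt_i lt_j; rewrite !gcodeE // => /(dcode_inj dihG) eq_g.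
  by apply: (@gcode_inj r) => //; apply: eq_g; apply: gcode_bound.
- move=> i lt_i; have [N0 N3] := gcode_avoid r_gt0 lt_i.
  rewrite gcodeE // !inE negb_or (mem_dcode dihG) andbT -[X in _ != X](expg0 u).
  by rewrite !gcodeNrot //; lia.
Qed.

Unset Implicit Arguments.

Theorem theorem5p9 (gT : finGroupType) (G : {group gT}) (u v : gT) (l : nat)
    (S : {set gT}) (x : gT) :
  odd l -> (3 %| l)%N ->
  is_dihedral G (4 * l + 3) u v ->
  S \subset G :\ 1 -> #|S| = (8 * l + 4)%N ->
  x \in G -> x != 1 -> x \notin S ->
  #[x] = ((4 * l + 3) %/ 3)%N ->
  exists s : seq gT, S_sequencing S s.
Proof.
move=> odd_l dvd3l dihG sSG cardS xG x1 xNS ox.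
have l_ge3 : 3 <= l by rewrite dvdn_leq // lt0n; apply: contraTneq odd_l => ->.
set q := ((4 * l + 3) %/ 3)%N in ox.
have m3q : (4 * l + 3 = 3 * q)%N by rewrite /q [RHS]mulnC divnK // dvdn_add ?dvdn_mull.
have x_rot : x \in <[u]> by apply: (dihedral_rotation dihG xG); rewrite ox /q; lia.
have ou : #[u] = (3 * q)%N by rewrite (dihedral_order dihG).
have [k cop_k def_x] := generator_expg_of_order (isT : prime 3) ou x_rot ox.
have [_ _ _ _ cardG] := dihG.
have -> : S = G :\: [set 1; x].
  by apply: setD_pair_eq; rewrite ?group1 // cardS cardG; lia.
rewrite -m3q in cop_k; rewrite def_x.
exact: dihedral_sequencing_cube (ltnW (ltnW l_ge3)) (dihedral_generator dihG cop_k).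
Qed.
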